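(* Let $\{\lambda_n\}_{n=0}^\infty$ be a non-trivial non-negative (classical) multiplier sequence and let $T$ be the linear operator on $\mathbb{R}[x]$ with $T(H_n)=\lambda_nH_n$ for all $n$, so that $G_T(x,y)=e^{y^2/4}\sum_{k\ge0}\frac{\lambda_kH_k(x)(-y)^k}{2^kk!}$. Then $G_T(-x,y)\notin\mathscr{L\text{-}P}_2(\mathbb{R})$.
   Context: The Hermite polynomials are defined by $\exp(2xt-t^2)=\sum_{n\ge0}\frac{H_n(x)}{n!}t^n$. A multiplier sequence is a real sequence $\{\lambda_n\}$ such that $x^n\mapsto\lambda_nx^n$ maps real-rooted polynomials to real-rooted polynomials. A sequence is trivial if there is $k$ with $\lambda_n=0$ for all $n\notin\{k,k+1\}$. The symbol of a linear operator $T$ on $\mathbb{R}[x]$ is $G_T(x,y)=\sum_{n\ge0}\frac{(-1)^nT(x^n)}{n!}y^n$. A polynomial in $\mathbb{C}[x,y]$ is stable if it has no zero with $\operatorname{Im}x>0,\operatorname{Im}y>0$; $\mathscr{L\text{-}P}_2(\mathbb{R})$ is the class of real entire functions of two variables that are limits, uniformly on compact subsets of $\mathbb{C}^2$, of real stable polynomials. *)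

From Stdlib Require Import Reals List Arith Factorial.
Open Scope R_scope.

Record Cpx := mkC { Re : R; Im : R }.
Definition C0 : Cpx := mkC 0 0.
Definition C1 : Cpx := mkC 1 0.
Definition CR (r : R) : Cpx := mkC r 0.
Definition Cadd (z w : Cpx) : Cpx := mkC (Re z + Re w) (Im z + Im w).
Definition Copp (z : Cpx) : Cpx := mkC (- Re z) (- Im z).
Definition Csub (z w : Cpx) : Cpx := Cadd z (Copp w).
Definition Cmul (z w : Cpx) : Cpx :=
  mkC (Re z * Re w - Im z * Im w) (Re z * Im w + Im z * Re w).
Fixpoint Cpow (z : Cpx) (n : nat) : Cpx :=
  match n with O => C1 | S k => Cmul z (Cpow z k) end.
Definition Cnorm (z : Cpx) : R := sqrt (Re z * Re z + Im z * Im z).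
Definition Cexp (z : Cpx) : Cpx :=
  mkC (exp (Re z) * cos (Im z)) (exp (Re z) * sin (Im z)).

Fixpoint Csum (f : nat -> Cpx) (n : nat) : Cpx :=
  match n with O => C0 | S k => Cadd (Csum f k) (f k) end.

Definition Cseries_cv (a : nat -> Cpx) (s : Cpx) : Prop :=
  forall eps, 0 < eps -> exists N, forall n, (N <= n)%nat ->
    Cnorm (Csub (Csum a n) s) < eps.

(** * Real univariate polynomials, as coefficient lists [a0; a1; ...] *)
Fixpoint peval (p : list R) (z : Cpx) : Cpx :=
  match p with nil => C0 | a :: q => Cadd (CR a) (Cmul z (peval q z)) end.

(** real-rooted: all zeros real (the zero polynomial counts as real-rooted) *)
Definition real_rooted (p : list R) : Prop :=
  (forall a, In a p -> a = 0) \/ (forall z, peval p z = C0 -> Im z = 0).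

(** the diagonal operator x^n |-> lam n x^n applied to a coefficient list *)
Fixpoint apply_seq_from (lam : nat -> R) (n : nat) (p : list R) : list R :=
  match p with nil => nil | a :: q => (lam n * a) :: apply_seq_from lam (S n) q end.
Definition apply_seq (lam : nat -> R) (p : list R) := apply_seq_from lam O p.

Definition multiplier_sequence (lam : nat -> R) : Prop :=
  forall p, real_rooted p -> real_rooted (apply_seq lam p).

Definition trivial_seq (lam : nat -> R) : Prop :=
  exists k, forall n, n <> k -> n <> S k -> lam n = 0.

(** * Hermite polynomials:  exp(2xt - t^2) = sum_n H_n(x) t^n / n!, i.e.
    H_n(x) = sum_{j <= n/2} (-1)^j n! / (j! (n-2j)!) (2x)^(n-2j)
    (coefficient of t^n in exp(2xt) * exp(-t^2), times n!). *)
Definition hermite (n : nat) (x : Cpx) : Cpx :=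
  Csum (fun j => if Nat.leb (2 * j) n then
          Cmul (CR ((-1) ^ j * INR (fact n) / (INR (fact j) * INR (fact (n - 2 * j)))))
               (Cpow (Cmul (CR 2) x) (n - 2 * j))
        else C0) (S n).

(** * Bivariate real polynomials: degree bound d, coefficients c i j of x^i y^j *)
Definition biv_eval (d : nat) (c : nat -> nat -> R) (x y : Cpx) : Cpx :=
  Csum (fun i => Csum (fun j => Cmul (CR (c i j)) (Cmul (Cpow x i) (Cpow y j))) (S d)) (S d).

Definition real_stable (d : nat) (c : nat -> nat -> R) : Prop :=
  forall x y, 0 < Im x -> 0 < Im y -> biv_eval d c x y <> C0.

(** L-P_2(R): limits, uniformly on compact subsets of Cpx^2, of real stable polynomials.
    (Every compact set lies in some closed polydisc |x|,|y| <= r.) *)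
Definition LP2 (F : Cpx -> Cpx -> Cpx) : Prop :=
  exists (d : nat -> nat) (c : nat -> nat -> nat -> R),
    (forall m, real_stable (d m) (c m)) /\
    forall r eps, 0 < eps -> exists M, forall m, (M <= m)%nat ->
      forall x y, Cnorm x <= r -> Cnorm y <= r ->
        Cnorm (Csub (biv_eval (d m) (c m) x y) (F x y)) < eps.

Definition GT_term (lam : nat -> R) (x y : Cpx) (k : nat) : Cpx :=
  Cmul (CR (lam k / (2 ^ k * INR (fact k)))) (Cmul (hermite k x) (Cpow (Copp y) k)).

Definition is_symbol (lam : nat -> R) (G : Cpx -> Cpx -> Cpx) : Prop :=
  forall x y, exists s, Cseries_cv (GT_term lam x y) s /\
    G x y = Cmul (Cexp (Cmul (CR (/ 4)) (Cmul y y))) s.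

From Pilot Require Import Defs.
From Stdlib Require Import Reals Lra Lia Classical Arith List.
Open Scope R_scope.

(** Let [F(x, y) = G_T(-x, y)].  The proof compares [F] at the two points
    [(i, i)] and [(i, -i)].

    - Stability side: if [P] is real stable, then for [x = i] fixed the
      polynomial [y |-> P(i, y)] has all its roots in the closed lower
      half-plane, so each linear factor satisfies [|-i - z| <= |i - z|] and
      [|P(i, -i)| <= |P(i, i)|].  This inequality survives locally uniform
      limits, hence holds for every member of [L-P_2(R)].
    - Symbol side: at [x = -i], [y = is] every term of the Hermite series is
      real, equal to [(-s)^k b_k] with [b_k >= 0] proportional to [lam k].
      Hence [|F(i, i)| = e^(-1/4) |sum (-1)^k b_k|] and
      [|F(i, -i)| = e^(-1/4) sum b_k], and the first is strictly smaller as
      soon as two consecutive [b_n], [b_(n+1)] are positive.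
    - Multiplier sequences: a non-trivial non-negative multiplier sequence
      has two consecutive positive terms, since a gap would send the
      real-rooted [x^p (1 + x)^m] to [x^p (lam p + lam (p+m) x^m)], which
      has non-real roots. *)

Lemma Ceq z w : Re z = Re w -> Im z = Im w -> z = w.
Proof. destruct z, w; simpl; intros; subst; reflexivity. Qed.

Ltac cring := apply Ceq; simpl; ring.

Lemma Cmul_assoc a b c : Cmul a (Cmul b c) = Cmul (Cmul a b) c.
Proof. cring. Qed.

Lemma Cpow_add z a b : Cpow z (a + b) = Cmul (Cpow z a) (Cpow z b).
Proof. induction a; simpl; [cring | rewrite IHa; apply Cmul_assoc]. Qed.

Lemma Cpow_Cmul a b n : Cpow (Cmul a b) n = Cmul (Cpow a n) (Cpow b n).
Proof.
  induction n; simpl; [cring|].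
  rewrite IHn; destruct a, b, (Cpow _ n), (Cpow _ n); cring.
Qed.

Lemma Cpow_double z j : Cpow z (2 * j) = Cpow (Cmul z z) j.
Proof.
  induction j; [reflexivity|].
  replace (2 * S j)%nat with (S (S (2 * j))) by lia; cbn [Cpow].
  rewrite IHj; destruct z, (Cpow _ j); cring.
Qed.

Lemma CR_mul a b : Cmul (CR a) (CR b) = CR (a * b).
Proof. cring. Qed.

Lemma CR_pow a n : Cpow (CR a) n = CR (a ^ n).
Proof. induction n; simpl; [reflexivity | rewrite IHn, CR_mul; reflexivity]. Qed.

Lemma de_moivre t n :
  Cpow (mkC (cos t) (sin t)) n = mkC (cos (INR n * t)) (sin (INR n * t)).
Proof.
  induction n; simpl Cpow.
  - simpl INR; rewrite Rmult_0_l, cos_0, sin_0; reflexivity.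
  - rewrite IHn, S_INR; replace ((INR n + 1) * t) with (t + INR n * t) by ring.
    rewrite cos_plus, sin_plus; cring.
Qed.

Lemma Cmul_eq0 a b : Cmul a b = Defs.C0 -> a = Defs.C0 \/ b = Defs.C0.
Proof.
  destruct a as [a1 a2], b as [b1 b2]; unfold Cmul, Defs.C0; simpl.
  intro H; injection H as H1 H2.
  assert (Hnorm : (a1*a1+a2*a2)*(b1*b1+b2*b2)
                  = (a1*b1-a2*b2)*(a1*b1-a2*b2) + (a1*b2+a2*b1)*(a1*b2+a2*b1)) by ring.
  rewrite H1, H2, Rmult_0_l, Rplus_0_l in Hnorm.
  apply Rmult_integral in Hnorm as [Ha|Hb]; [left|right]; apply Ceq; simpl; nra.
Qed.

Lemma Cpow_eq0 z n : Cpow z n = Defs.C0 -> z = Defs.C0.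
Proof.
  induction n; simpl; intro H.
  - injection H; lra.
  - destruct (Cmul_eq0 _ _ H); auto.
Qed.

Lemma Rabs_Re_le_Cnorm z : Rabs (Re z) <= Cnorm z.
Proof. rewrite <- sqrt_Rsqr_abs; apply sqrt_le_1_alt; unfold Rsqr; nra. Qed.

Lemma Rabs_Im_le_Cnorm z : Rabs (Im z) <= Cnorm z.
Proof. rewrite <- sqrt_Rsqr_abs; apply sqrt_le_1_alt; unfold Rsqr; nra. Qed.

Lemma Cnorm_real r : Cnorm (CR r) = Rabs r.
Proof. unfold Cnorm; simpl; rewrite <- sqrt_Rsqr_abs; f_equal; unfold Rsqr; ring. Qed.

Lemma Cnorm_triangle u v : Cnorm (Cadd u v) <= Cnorm u + Cnorm v.
Proof.
  destruct u as [a b], v as [c d]; unfold Cnorm; simpl.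
  set (nu := a*a+b*b); set (nv := c*c+d*d).
  assert (Hu : 0 <= nu) by (unfold nu; nra); assert (Hv : 0 <= nv) by (unfold nv; nra).
  assert (Hcs : a*c+b*d <= sqrt nu * sqrt nv).
  { rewrite <- sqrt_mult by auto.
    apply Rle_trans with (Rabs (a*c+b*d)); [apply Rle_abs|].
    rewrite <- sqrt_Rsqr_abs; apply sqrt_le_1_alt; unfold Rsqr, nu, nv.
    pose proof (Rle_0_sqr (a*d-b*c)); unfold Rsqr in *; nra. }
  pose proof (sqrt_pos nu); pose proof (sqrt_pos nv).
  pose proof (sqrt_sqrt nu Hu); pose proof (sqrt_sqrt nv Hv).
  rewrite <- (sqrt_square (sqrt nu + sqrt nv)) by lra.
  apply sqrt_le_1_alt.
  replace ((a + c) * (a + c) + (b + d) * (b + d)) with (nu + nv + 2 * (a*c+b*d))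
    by (unfold nu, nv; ring).
  nra.
Qed.

Lemma Cnorm_close a b :
  Cnorm a <= Cnorm b + Cnorm (Csub a b) /\ Cnorm b <= Cnorm a + Cnorm (Csub a b).
Proof.
  split.
  - replace a with (Cadd b (Csub a b)) at 1 by (destruct a, b; cring).
    apply Cnorm_triangle.
  - replace b with (Cadd a (Copp (Csub a b))) at 1 by (destruct a, b; cring).
    replace (Cnorm (Csub a b)) with (Cnorm (Copp (Csub a b)))
      by (unfold Cnorm; destruct (Csub a b); simpl; f_equal; ring).
    apply Cnorm_triangle.
Qed.

Fixpoint rsum (g : nat -> R) (n : nat) : R :=
  match n with O => 0 | S k => rsum g k + g k end.

Lemma Csum_CR g n : Csum (fun j => CR (g j)) n = CR (rsum g n).
Proof. induction n; simpl; [reflexivity | rewrite IHn; cring]. Qed.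

Lemma Csum_ext f g n : (forall j, (j < n)%nat -> f j = g j) -> Csum f n = Csum g n.
Proof. induction n; simpl; intros H; [reflexivity | rewrite IHn, H; auto]. Qed.

Lemma Csum_mul_r f n w : Cmul (Csum f n) w = Csum (fun j => Cmul (f j) w) n.
Proof.
  induction n; simpl; [cring|].
  rewrite <- IHn; destruct (Csum f n), (f n), w; cring.
Qed.

Lemma rsum_ext g h n : (forall k, g k = h k) -> rsum g n = rsum h n.
Proof. intro H; induction n; simpl; [reflexivity | rewrite IHn, H; reflexivity]. Qed.

Lemma rsum_scal c g n : c * rsum g n = rsum (fun j => c * g j) n.
Proof. induction n; simpl; [ring | rewrite <- IHn; ring]. Qed.

Lemma rsum_lin g h a n : rsum (fun k => g k + a * h k) n = rsum g n + a * rsum h n.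
Proof. induction n; simpl; [ring | rewrite IHn; ring]. Qed.

Lemma rsum_ge0 g n : (forall j, 0 <= g j) -> 0 <= rsum g n.
Proof. intro H; induction n; simpl; [lra | specialize (H n); lra]. Qed.

Lemma rsum_ge_term g n j : (forall j, 0 <= g j) -> (j < n)%nat -> g j <= rsum g n.
Proof.
  intros H; induction n; intros Hj; [lia|]; simpl.
  pose proof (H n).
  destruct (Nat.eq_dec j n) as [->|Hne].
  - pose proof (rsum_ge0 g n H); lra.
  - assert (g j <= rsum g n) by (apply IHn; lia); lra.
Qed.

Lemma rsum_ge_pair g n j :
  (forall j, 0 <= g j) -> (S j < n)%nat -> g j + g (S j) <= rsum g n.
Proof.
  intros H; induction n; intros Hj; [lia|]; simpl.
  pose proof (H n).
  destruct (Nat.eq_dec (S j) n) as [<-|Hne].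
  - simpl; pose proof (rsum_ge0 g j H); lra.
  - assert (g j + g (S j) <= rsum g n) by (apply IHn; lia); lra.
Qed.

Lemma cv_lower_bound u l c N :
  Un_cv u l -> (forall n, (N <= n)%nat -> c <= u n) -> c <= l.
Proof.
  intros Hu Hc; apply Rnot_lt_le; intro Hlt.
  destruct (Hu (c - l)) as [N' HN']; [lra|].
  specialize (HN' (N + N')%nat ltac:(lia)); specialize (Hc (N + N')%nat ltac:(lia)).
  unfold Rdist in HN'; apply Rabs_def2 in HN'; lra.
Qed.

Lemma cv_lin u v U V a : Un_cv u U -> Un_cv v V -> Un_cv (fun n => u n + a * v n) (U + a * V).
Proof.
  intros Hu Hv; apply CV_plus, CV_mult; auto.
  intros eps He; exists 0%nat; intros; unfold Rdist; rewrite Rminus_diag, Rabs_R0; lra.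
Qed.

Lemma real_series_cv u s :
  Cseries_cv (fun k => CR (u k)) s -> Im s = 0 /\ Un_cv (rsum u) (Re s).
Proof.
  intros Hc; split.
  - destruct (Req_dec (Im s) 0) as [h0|h0]; auto; exfalso.
    destruct (Hc (Rabs (Im s))) as [N HN]; [apply Rabs_pos_lt; auto|].
    specialize (HN N (Nat.le_refl N)); rewrite Csum_CR in HN.
    pose proof (Rabs_Im_le_Cnorm (Csub (CR (rsum u N)) s)) as Hle; simpl in Hle.
    replace (0 + - Im s) with (- Im s) in Hle by ring; rewrite Rabs_Ropp in Hle; lra.
  - intros eps He; destruct (Hc eps He) as [N HN]; exists N; intros n Hn.
    specialize (HN n Hn); rewrite Csum_CR in HN.
    pose proof (Rabs_Re_le_Cnorm (Csub (CR (rsum u n)) s)) as Hle; simpl in Hle; unfold Rdist, Rminus; lra.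
Qed.

(** If [b >= 0] has two consecutive positive terms, the alternating series
    [sum (-1)^k b k] is strictly smaller in modulus than [sum b k]: both
    [sum b + sum (-1)^k b] and [sum b - sum (-1)^k b] retain one of the two
    doubled positive terms. *)
Lemma alternating_sum_lt (b : nat -> R) n A P :
  (forall k, 0 <= b k) -> 0 < b n -> 0 < b (S n) ->
  Un_cv (rsum (fun k => (-1)^k * b k)) A -> Un_cv (rsum b) P ->
  Rabs A < P.
Proof.
  intros Hb Hn Hsn HA HP.
  set (mu := Rmin (b n) (b (S n))).
  assert (Hmu : 0 < mu) by (apply Rmin_glb_lt; auto).
  assert (Hmu_n : mu <= b n) by apply Rmin_l.
  assert (Hmu_Sn : mu <= b (S n)) by apply Rmin_r.
  assert (Hsign : forall k, -1 <= (-1)^k <= 1) by (induction k; simpl; lra).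
  assert (Hbound : forall sigma, (sigma = 1 \/ sigma = -1) -> 2 * mu <= P + sigma * A).
  { intros sigma Hs.
    apply (cv_lower_bound _ _ _ (S (S n)) (cv_lin _ _ _ _ sigma HP HA)).
    intros m Hm; rewrite <- rsum_lin.
    assert (He : forall k, 0 <= b k + sigma * ((-1) ^ k * b k)).
    { intro k; pose proof (Hsign k); pose proof (Hb k); destruct Hs; subst; nra. }
    pose proof (rsum_ge_pair _ m n He ltac:(lia)) as Hpair; cbv beta in Hpair.
    replace ((-1) ^ S n) with (- (-1)^n) in Hpair by (simpl; ring).
    pose proof (Hsign n) as [Hlo Hhi].
    assert (Hprod : forall t, -1 <= t <= 1 -> 2 * mu <= b n + b (S n) + (t * b n - t * b (S n))).
    { intros t Ht; destruct (Rle_dec (b n) (b (S n))); nra. }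
    destruct Hs; subst sigma.
    + specialize (Hprod ((-1)^n) (conj Hlo Hhi)); lra.
    + specialize (Hprod (- (-1)^n) ltac:(lra)); lra. }
  pose proof (Hbound 1 (or_introl eq_refl)); pose proof (Hbound (-1) (or_intror eq_refl)).
  apply Rabs_def1; lra.
Qed.

Definition Ci : Cpx := mkC 0 1.
Definition Cmi : Cpx := mkC 0 (-1).

(** [hq k j = 2^(k-2j) k! / (j! (k-2j)!)] is the modulus of the [j]-th
    summand of [H_k(-i)]. *)
Definition hq (k j : nat) : R :=
  if Nat.leb (2 * j) k
  then 2 ^ (k - 2 * j) * INR (fact k) / (INR (fact j) * INR (fact (k - 2 * j)))
  else 0.

Lemma fact_INR_pos k : 0 < INR (fact k).
Proof. apply lt_0_INR, lt_O_fact. Qed.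

Lemma hq_ge0 k j : 0 <= hq k j.
Proof.
  unfold hq; destruct (Nat.leb (2*j) k); [|lra].
  pose proof (fact_INR_pos k); pose proof (fact_INR_pos j);
    pose proof (fact_INR_pos (k - 2 * j)); pose proof (pow_lt 2 (k - 2 * j) ltac:(lra)).
  apply Rmult_le_pos; [nra | apply Rlt_le, Rinv_0_lt_compat; nra].
Qed.

Lemma hq_sum_pos k : 0 < rsum (hq k) (S k).
Proof.
  assert (H0 : 0 < hq k 0).
  { unfold hq; simpl Nat.leb; rewrite Nat.sub_0_r; simpl fact; simpl INR.
    pose proof (fact_INR_pos k); pose proof (pow_lt 2 k ltac:(lra)).
    replace (2 ^ k * INR (fact k) / (1 * INR (fact k))) with (2 ^ k) by (field; lra).
    assumption. }
  pose proof (rsum_ge_term (hq k) (S k) 0 (hq_ge0 k) ltac:(lia)); lra.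
Qed.

(** On the imaginary axis the Hermite series has real terms: for real [s],
    [H_k(-i) (-is)^k = (-s)^k sum_j hq k j], because
    [(-2i)^(k-2j) (-is)^k = (-2s)^(k-2j) (-s^2)^j] and the sign [(-1)^j] of
    the Hermite coefficient cancels the one of [(-s^2)^j]. *)
Lemma hermite_on_imaginary_axis k s :
  Cmul (hermite k (Copp Ci)) (Cpow (Copp (mkC 0 s)) k)
  = CR ((-s) ^ k * rsum (hq k) (S k)).
Proof.
  unfold hermite; rewrite Csum_mul_r, rsum_scal, <- Csum_CR.
  apply Csum_ext; intros j Hj; unfold hq.
  destruct (Nat.leb (2 * j) k) eqn:E; [|cring].
  apply Nat.leb_le in E.
  set (m := (k - 2 * j)%nat); set (w := Copp (mkC 0 s)).
  replace (Cpow w k) with (Cpow w (m + 2 * j)) by (f_equal; unfold m; lia).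
  rewrite Cpow_add, Cpow_double.
  assert (Hw2 : Cmul (Cmul (CR 2) (Copp Ci)) w = CR (2 * - s)) by (unfold w; cring).
  assert (Hww : Cmul w w = CR (- (s * s))) by (unfold w; cring).
  transitivity (Cmul (CR ((-1) ^ j * INR (fact k) / (INR (fact j) * INR (fact m))))
                  (Cmul (Cpow (Cmul (Cmul (CR 2) (Copp Ci)) w) m) (Cpow (Cmul w w) j))).
  { rewrite (Cpow_Cmul _ w m).
    destruct (Cpow (Cmul (CR 2) (Copp Ci)) m), (Cpow w m), (Cpow (Cmul w w) j); cring. }
  rewrite Hw2, Hww, !CR_pow, !CR_mul; f_equal.
  replace ((- s) ^ k) with ((- s) ^ m * ((- s) ^ 2) ^ j)
    by (rewrite <- pow_mult, <- pow_add; f_equal; unfold m; lia).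
  assert (Hsq : (- (s * s)) ^ j = (-1) ^ j * ((- s) ^ 2) ^ j)
    by (rewrite <- Rpow_mult_distr; f_equal; ring).
  assert (Hsign : (-1) ^ j * (-1) ^ j = 1)
    by (rewrite <- Rpow_mult_distr; replace (-1 * -1) with 1 by ring; apply pow1).
  rewrite Hsq, Rpow_mult_distr.
  transitivity (((-1) ^ j * (-1) ^ j) * ((- s) ^ m * ((- s) ^ 2) ^ j *
     (2 ^ m * INR (fact k) / (INR (fact j) * INR (fact m))))); [unfold Rdiv; ring|].
  rewrite Hsign; ring.
Qed.

Definition symbol_coef (lam : nat -> R) (k : nat) : R :=
  lam k / (2 ^ k * INR (fact k)) * rsum (hq k) (S k).

Lemma GT_term_on_imaginary_axis lam s k :
  GT_term lam (Copp Ci) (mkC 0 s) k = CR ((-s) ^ k * symbol_coef lam k).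
Proof.
  unfold GT_term; rewrite hermite_on_imaginary_axis, CR_mul; f_equal.
  unfold symbol_coef; ring.
Qed.

Lemma symbol_coef_sign lam k :
  (0 <= lam k -> 0 <= symbol_coef lam k) /\ (0 < lam k -> 0 < symbol_coef lam k).
Proof.
  unfold symbol_coef.
  pose proof (hq_sum_pos k); pose proof (fact_INR_pos k); pose proof (pow_lt 2 k ltac:(lra)).
  assert (0 < / (2 ^ k * INR (fact k))) by (apply Rinv_0_lt_compat; nra).
  unfold Rdiv; split; intro.
  - apply Rmult_le_pos; [apply Rmult_le_pos|]; lra.
  - apply Rmult_lt_0_compat; [apply Rmult_lt_0_compat|]; lra.
Qed.

(** Value of the symbol at [(-i, is)]: the exponential factor is
    [e^(-s^2/4) > 0] and the series is real. *)
Lemma symbol_on_imaginary_axis lam G s :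
  is_symbol lam G ->
  exists v, Un_cv (rsum (fun k => (-s) ^ k * symbol_coef lam k)) v /\
            Cnorm (G (Copp Ci) (mkC 0 s)) = exp (- (s * s) / 4) * Rabs v.
Proof.
  intros HG; destruct (HG (Copp Ci) (mkC 0 s)) as [S [Hcv HGS]].
  assert (Hreal : Cseries_cv (fun k => CR ((-s) ^ k * symbol_coef lam k)) S).
  { intros eps He; destruct (Hcv eps He) as [N HN]; exists N; intros n Hn.
    rewrite (Csum_ext _ (GT_term lam (Copp Ci) (mkC 0 s)) n)
      by (intros; symmetry; apply GT_term_on_imaginary_axis).
    auto. }
  apply real_series_cv in Hreal as [HIm Hlim].
  exists (Re S); split; auto.
  assert (HS : S = CR (Re S)) by (apply Ceq; simpl; auto).
  assert (Hexp : Cexp (Cmul (CR (/ 4)) (Cmul (mkC 0 s) (mkC 0 s))) = CR (exp (- (s * s) / 4))).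
  { unfold Cexp; apply Ceq; simpl.
    - replace (/ 4 * (0 * 0 - s * s) - 0 * (0 * s + s * 0)) with (- (s * s) / 4) by field.
      replace (/ 4 * (0 * s + s * 0) + 0 * (0 * 0 - s * s)) with 0 by ring.
      rewrite cos_0; ring.
    - replace (/ 4 * (0 * s + s * 0) + 0 * (0 * 0 - s * s)) with 0 by ring.
      rewrite sin_0; ring. }
  rewrite HGS, Hexp, HS, CR_mul, Cnorm_real, Rabs_mult, (Rabs_pos_eq (exp _));
    [reflexivity | apply Rlt_le, exp_pos].
Qed.

Lemma symbol_norm_lt lam G :
  (forall k, 0 <= lam k) -> is_symbol lam G ->
  (exists n, 0 < lam n /\ 0 < lam (S n)) ->
  Cnorm (G (Copp Ci) Ci) < Cnorm (G (Copp Ci) Cmi).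
Proof.
  intros Hnn HG [n [Hn HSn]]; 
  change (G (Copp Ci) Ci) with (G (Copp Ci) (mkC 0 1)).
  change (G (Copp Ci) Cmi) with (G (Copp Ci) (mkC 0 (-1))).
  destruct (symbol_on_imaginary_axis lam G 1 HG) as [A [HA ->]].
  destruct (symbol_on_imaginary_axis lam G (-1) HG) as [P [HP ->]].
  assert (HP' : Un_cv (rsum (symbol_coef lam)) P).
  { intros eps He; destruct (HP eps He) as [N HN]; exists N; intros m Hm.
    rewrite (rsum_ext _ (fun k => (- -1) ^ k * symbol_coef lam k)); auto.
    intro k; replace (- -1) with 1 by ring; rewrite pow1; ring. }
  assert (HAP : Rabs A < P).
  { apply (alternating_sum_lt (symbol_coef lam) n); auto;
      try (intro k; apply symbol_coef_sign; auto); apply symbol_coef_sign; auto. }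
  replace (- (-1 * -1) / 4) with (- (1 * 1) / 4) by field.
  pose proof (Rle_abs P); apply Rmult_lt_compat_l; [apply exp_pos | lra].
Qed.

Fixpoint ladd (l1 l2 : list R) : list R :=
  match l1, l2 with
  | nil, _ => l2
  | _, nil => l1
  | a :: t1, b :: t2 => (a + b) :: ladd t1 t2
  end.

Fixpoint binom_list (m : nat) : list R :=
  match m with O => 1 :: nil | S k => ladd (binom_list k) (0 :: binom_list k) end.

Lemma peval_ladd l1 l2 z : peval (ladd l1 l2) z = Cadd (peval l1 z) (peval l2 z).
Proof.
  revert l2; induction l1; intros l2; destruct l2; simpl; try cring.
  rewrite IHl1; destruct (peval l1 z), (peval l2 z), z; cring.
Qed.

Lemma peval_shift p l z : peval (repeat 0 p ++ l) z = Cmul (Cpow z p) (peval l z).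
Proof.
  induction p; simpl; [destruct (peval l z); cring|].
  rewrite IHp; destruct (Cpow z p), (peval l z), z; cring.
Qed.

Lemma peval_binom_list m z : peval (binom_list m) z = Cpow (Cadd Defs.C1 z) m.
Proof.
  induction m; simpl; [destruct z; cring|].
  change (0 :: binom_list m) with (repeat 0 1 ++ binom_list m).
  rewrite peval_ladd, peval_shift, IHm; simpl.
  destruct (Cpow _ m), z; cring.
Qed.

Lemma nth_ladd l1 l2 j : nth j (ladd l1 l2) 0 = nth j l1 0 + nth j l2 0.
Proof. revert l2 j; induction l1; intros l2 j; destruct l2, j; simpl; try ring; apply IHl1. Qed.

Lemma nth_shift p l j :
  nth j (repeat 0 p ++ l) 0 = if Nat.ltb j p then 0 else nth (j - p) l 0.
Proof.
  revert j; induction p; intros j; simpl; [rewrite Nat.sub_0_r; reflexivity|].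
  destruct j; simpl; auto.
Qed.

Lemma binom_list_high m j : (m < j)%nat -> nth j (binom_list m) 0 = 0.
Proof.
  revert j; induction m; intros j Hj; simpl.
  - destruct j as [|[|j]]; [lia | reflexivity | reflexivity].
  - rewrite nth_ladd; destruct j; [lia|]; simpl; rewrite !IHm by lia; ring.
Qed.

Lemma binom_list_ends m : nth 0 (binom_list m) 0 = 1 /\ nth m (binom_list m) 0 = 1.
Proof.
  induction m as [|m [IH0 IHm]]; [split; reflexivity|]; simpl; rewrite !nth_ladd; split.
  - simpl; rewrite IH0; ring.
  - simpl; rewrite IHm, binom_list_high by lia; ring.
Qed.

Lemma peval_zero_coeffs l z : (forall j, nth j l 0 = 0) -> peval l z = Defs.C0.
Proof.
  induction l; simpl; intro H; [reflexivity|].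
  rewrite IHl by (intro j; apply (H (S j))).
  specialize (H 0%nat); simpl in H; subst; cring.
Qed.

Lemma peval_coeffs l1 l2 z :
  (forall j, nth j l1 0 = nth j l2 0) -> peval l1 z = peval l2 z.
Proof.
  revert l2; induction l1 as [|a l1 IH]; intros l2 H.
  - symmetry; apply peval_zero_coeffs; intro j; rewrite <- H; destruct j; auto.
  - destruct l2 as [|b l2].
    + apply peval_zero_coeffs; intro j; rewrite H; destruct j; auto.
    + simpl; rewrite (IH l2) by (intro j; apply (H (S j))).
      specialize (H 0%nat); simpl in H; subst; reflexivity.
Qed.

Lemma real_rooted_coeffs l :
  real_rooted l -> (forall j, nth j l 0 = 0) \/ (forall z, peval l z = Defs.C0 -> Im z = 0).
Proof.
  intros [Hall|Hroots]; [left|right; exact Hroots].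
  intro j; destruct (nth_in_or_default j l 0) as [Hin|Hdef]; auto.
Qed.

Lemma apply_seq_coeff lam l j : nth j (apply_seq lam l) 0 = lam j * nth j l 0.
Proof.
  unfold apply_seq; change j with (0 + j)%nat at 2; generalize 0%nat.
  revert j; induction l; intros j n; destruct j; simpl; try ring.
  - rewrite Nat.add_0_r; reflexivity.
  - rewrite IHl; f_equal; f_equal; lia.
Qed.

Lemma shifted_binomial_real_rooted p m : real_rooted (repeat 0 p ++ binom_list m).
Proof.
  right; intros z Hz; rewrite peval_shift, peval_binom_list in Hz.
  destruct (Cmul_eq0 _ _ Hz) as [H|H]; apply Cpow_eq0 in H.
  - subst; reflexivity.
  - destruct z; injection H; simpl; lra.
Qed.

(** For [x > 0] and [m >= 2], [z^m = -x] has a root off the real axis,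
    namely [x^(1/m) e^(i pi/m)]. *)
Lemma nonreal_root_of_negative x m :
  0 < x -> (2 <= m)%nat -> exists z, Im z <> 0 /\ Cpow z m = CR (- x).
Proof.
  intros Hx Hm.
  assert (Hmr : 2 <= INR m) by (replace 2 with (INR 2) by (simpl; ring); apply le_INR; auto).
  set (rho := Rpower x (/ INR m)); set (t := PI / INR m).
  assert (Hrho : 0 < rho) by apply exp_pos.
  assert (Hrm : rho ^ m = x).
  { rewrite <- Rpower_pow by auto; unfold rho; rewrite Rpower_mult.
    replace (/ INR m * INR m) with 1 by (field; lra); apply Rpower_1; auto. }
  assert (Hsin : 0 < sin t).
  { pose proof PI_RGT_0; apply sin_gt_0; unfold t.
    - apply Rdiv_lt_0_compat; lra.
    - apply (Rmult_lt_reg_r (INR m)); [lra|].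
      unfold Rdiv; rewrite Rmult_assoc, Rinv_l by lra; nra. }
  exists (Cmul (CR rho) (mkC (cos t) (sin t))); split.
  - simpl; nra.
  - rewrite Cpow_Cmul, de_moivre, CR_pow, Hrm.
    replace (INR m * t) with PI by (unfold t; field; lra).
    rewrite cos_PI, sin_PI; cring.
Qed.

Lemma gap_image lam p m :
  (1 <= m)%nat -> (forall j, (0 < j < m)%nat -> lam (p + j)%nat = 0) ->
  forall j, nth j (apply_seq lam (repeat 0 p ++ binom_list m)) 0
            = nth j (ladd (repeat 0 p ++ lam p :: nil)
                          (repeat 0 (p + m) ++ lam (p + m)%nat :: nil)) 0.
Proof.
  intros Hm Hgap j; destruct (binom_list_ends m) as [Hb0 Hbm].
  assert (Hsingle : forall k (a : R), (0 < k)%nat -> nth k (a :: nil) 0 = 0)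
    by (intros [|[|k]] a Hk; [lia | reflexivity | reflexivity]).
  rewrite apply_seq_coeff, nth_ladd, !nth_shift.
  destruct (Nat.ltb_spec j p), (Nat.ltb_spec j (p + m)); try lia.
  - ring.
  - destruct (Nat.eq_dec j p) as [->|Hne].
    + rewrite Nat.sub_diag, Hb0; simpl; ring.
    + replace j with (p + (j - p))%nat at 1 by lia.
      rewrite Hgap, Hsingle by lia; ring.
  - destruct (Nat.eq_dec j (p + m)) as [->|Hne].
    + replace (p + m - p)%nat with m by lia.
      rewrite Hbm, Nat.sub_diag, Hsingle by lia; simpl; ring.
    + rewrite binom_list_high, !Hsingle by lia; ring.
Qed.

(** A multiplier sequence cannot vanish strictly between two positive terms
    at distance [m >= 2]: otherwise [x^p (1 + x)^m] would be mapped to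
    [x^p (lam p + lam (p+m) x^m)], which has non-real roots. *)
Lemma multiplier_sequence_no_gap lam p m :
  multiplier_sequence lam -> (2 <= m)%nat -> 0 < lam p -> 0 < lam (p + m)%nat ->
  (forall j, (0 < j < m)%nat -> lam (p + j)%nat = 0) -> False.
Proof.
  intros Hms Hm Hp Hpm Hgap.
  pose proof (gap_image lam p m ltac:(lia) Hgap) as Himg.
  destruct (real_rooted_coeffs _ (Hms _ (shifted_binomial_real_rooted p m))) as [Hzero|Hroots].
  - specialize (Hzero p); rewrite Himg, nth_ladd, !nth_shift, Nat.ltb_irrefl, Nat.sub_diag in Hzero.
    replace (Nat.ltb p (p + m)) with true in Hzero by (symmetry; apply Nat.ltb_lt; lia).
    simpl in Hzero; lra.
  - destruct (nonreal_root_of_negative (lam p / lam (p + m)%nat) m) as [z [Hz Hzm]];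
      [apply Rdiv_lt_0_compat; auto | auto |].
    apply Hz, Hroots; rewrite (peval_coeffs _ _ z Himg), peval_ladd, !peval_shift, Cpow_add, Hzm.
    simpl; destruct (Cpow z p), z; apply Ceq; simpl; field; lra.
Qed.

Lemma least_witness (P : nat -> Prop) :
  (exists n, P n) -> exists n, P n /\ forall k, (k < n)%nat -> ~ P k.
Proof.
  intros [n Hn]; revert Hn; induction n as [n IH] using (well_founded_induction lt_wf); intro Hn.
  destruct (classic (exists k, (k < n)%nat /\ P k)) as [[k [Hk Pk]]|Hno].
  - exact (IH k Hk Pk).
  - exists n; split; auto; intros k Hk Pk; apply Hno; eauto.
Qed.

(** A non-trivial non-negative multiplier sequence has two consecutive
    positive terms: take the first positive term [lam p]; the next positive
    term must be [lam (p+1)] by [multiplier_sequence_no_gap]. *)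
Lemma multiplier_sequence_consecutive_pos lam :
  multiplier_sequence lam -> ~ trivial_seq lam -> (forall n, 0 <= lam n) ->
  exists n, 0 < lam n /\ 0 < lam (S n).
Proof.
  intros Hms Hnt Hnn.
  assert (Hpos : forall n, lam n <> 0 -> 0 < lam n) by (intros n Hn; specialize (Hnn n); lra).
  destruct (least_witness (fun n => 0 < lam n)) as [p [Hp Hpmin]].
  { apply NNPP; intro H; apply Hnt; exists 0%nat; intros n _ _.
    apply NNPP; intro Hn; apply H; eauto. }
  destruct (classic (0 < lam (S p))) as [HSp|HSp]; [eauto|exfalso].
  destruct (least_witness (fun q => (p < q)%nat /\ 0 < lam q)) as [q [[Hpq Hq] Hqmin]].
  { apply NNPP; intro H; apply Hnt; exists p; intros n H1 H2.
    apply NNPP; intro Hn; apply Hpos in Hn.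
    destruct (Nat.lt_total n p) as [Hlt|[->|Hgt]]; [exact (Hpmin n Hlt Hn) | auto | eauto]. }
  assert (q <> S p) by (intro; subst; auto).
  apply (multiplier_sequence_no_gap lam p (q - p) Hms); [lia | auto | |].
  - replace (p + (q - p))%nat with q by lia; auto.
  - intros j Hj; apply NNPP; intro Hn; apply Hpos in Hn.
    apply (Hqmin (p + j)%nat); [lia | split; auto; lia].
Qed.

From HB Require Import structures.
From mathcomp Require Import all_boot all_order all_algebra.
From mathcomp Require Import Rstruct complex.
Import GRing.Theory Num.Theory.

Section StabilityInequality.
Local Open Scope ring_scope.

Definition to_Ri (z : Cpx) : R[i] := Complex (Defs.Re z) (Defs.Im z).

Definition sqnorm (z : R[i]) : R :=
  Rplus (Rmult (complex.Re z) (complex.Re z)) (Rmult (complex.Im z) (complex.Im z)).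

Lemma to_Ri_add z w : to_Ri (Cadd z w) = to_Ri z + to_Ri w.
Proof. by case: z; case: w. Qed.

Lemma to_Ri_mul z w : to_Ri (Cmul z w) = to_Ri z * to_Ri w.
Proof. by case: z; case: w. Qed.

Lemma to_Ri_pow z n : to_Ri (Cpow z n) = to_Ri z ^+ n.
Proof. by elim: n => [|n IH] //=; rewrite to_Ri_mul IH exprS. Qed.

Lemma to_Ri_sum f n : to_Ri (Csum f n) = \sum_(j < n) to_Ri (f j).
Proof. by elim: n => [|n IH] /=; rewrite ?big_ord0 // to_Ri_add IH big_ord_recr. Qed.

Lemma to_Ri_eq0 z : to_Ri z = 0 -> z = Defs.C0.
Proof. by case: z => a b [-> ->]. Qed.

Lemma sqnormM x y : sqnorm (x * y) = Rmult (sqnorm x) (sqnorm y).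
Proof.
  case: x => a b; case: y => c d; rewrite /sqnorm /=.
  rewrite -!RplusE -!RmultE -?RoppE; ring.
Qed.

Lemma sqnorm_ge0 z : Rle 0 (sqnorm z).
Proof. by apply: Rplus_le_le_0_compat; apply: Rle_0_sqr. Qed.

Lemma lower_half_plane_closer (z : R[i]) : Rle (complex.Im z) 0 ->
  Rle (sqnorm (to_Ri Cmi - z)) (sqnorm (to_Ri Ci - z)).
Proof.
  case: z => a b /= hb; rewrite /sqnorm /= -?RplusE -?RmultE -?RoppE.
  have Hdiff : Rminus (Rmult (Rplus 1 (Ropp b)) (Rplus 1 (Ropp b)))
      (Rmult (Rplus (Ropp 1) (Ropp b)) (Rplus (Ropp 1) (Ropp b))) = Rmult (-4) b by ring.
  lra.
Qed.

Lemma lower_rooted_poly_ineq (p : {poly R[i]}) :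
  (forall z, root p z -> Rle (complex.Im z) 0) ->
  Rle (sqnorm p.[to_Ri Cmi]) (sqnorm p.[to_Ri Ci]).
Proof.
  move=> Hroots; have [r Hr] := closed_field_poly_normal p.
  have [->|pnz] := eqVneq p 0; first by rewrite !horner0; apply: Rle_refl.
  have Hr_roots : forall z, z \in r -> Rle (complex.Im z) 0.
    move=> z Hz; apply: Hroots; apply/rootP.
    by rewrite Hr hornerZ horner_prod (big_rem z Hz) /= hornerXsubC subrr mul0r mulr0.
  rewrite Hr !hornerZ !horner_prod !sqnormM.
  apply: Rmult_le_compat_l; first exact: sqnorm_ge0.
  elim: r Hr_roots {Hr} => [|x r IH] Hr_roots; first by rewrite !big_nil; apply: Rle_refl.
  rewrite !big_cons !hornerXsubC !sqnormM; apply: Rmult_le_compat; try exact: sqnorm_ge0.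
    by apply: lower_half_plane_closer; apply: Hr_roots; rewrite inE eqxx.
  by apply: IH => z Hz; apply: Hr_roots; rewrite inE Hz orbT.
Qed.

Definition section_poly (d : nat) (c : nat -> nat -> R) (x0 : Cpx) : {poly R[i]} :=
  \sum_(i < d.+1) \sum_(j < d.+1) (to_Ri (CR (c i j)) * to_Ri x0 ^+ i) *: 'X^j.

Lemma section_poly_horner d c x0 y :
  (section_poly d c x0).[to_Ri y] = to_Ri (biv_eval d c x0 y).
Proof.
  rewrite /biv_eval to_Ri_sum horner_sum; apply: eq_bigr => i _.
  rewrite to_Ri_sum horner_sum; apply: eq_bigr => j _.
  by rewrite hornerZ hornerXn !to_Ri_mul !to_Ri_pow mulrA.
Qed.

(** A real stable polynomial [P] satisfies [|P(i, -i)| <= |P(i, i)|]: with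
    [x = i] fixed, stability puts every root in [y] in the closed lower
    half-plane. *)
Lemma real_stable_norm_ineq d c : real_stable d c ->
  Rle (Cnorm (biv_eval d c Ci Cmi)) (Cnorm (biv_eval d c Ci Ci)).
Proof.
  move=> Hstable.
  suff : Rle (sqnorm (to_Ri (biv_eval d c Ci Cmi))) (sqnorm (to_Ri (biv_eval d c Ci Ci))).
    exact: sqrt_le_1_alt.
  rewrite -!section_poly_horner; apply: lower_rooted_poly_ineq.
  move=> [a b] /rootP Hz /=; apply: Rnot_lt_le => hb.
  apply: (Hstable Ci (mkC a b)) => //=; first exact: Rlt_0_1.
  by apply: to_Ri_eq0; rewrite -section_poly_horner.
Qed.

End StabilityInequality.

Open Scope R_scope.

Lemma Cnorm_Ci : Cnorm Ci <= 1.
Proof. unfold Cnorm, Ci; simpl; replace (0*0+1*1) with 1 by ring; rewrite sqrt_1; lra. Qed.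

Lemma Cnorm_Cmi : Cnorm Cmi <= 1.
Proof. unfold Cnorm, Cmi; simpl; replace (0*0+ -1 * -1) with 1 by ring; rewrite sqrt_1; lra. Qed.

(** Every stable approximant [P] of [F] satisfies
    [|P(i, -i)| <= |P(i, i)|], which passes to the limit, whereas
    [|F(i, i)| < |F(i, -i)|]. *)
Theorem mainTheorem9 (lam : nat -> R)
  (Hms : multiplier_sequence lam)
  (Hnontriv : ~ trivial_seq lam)
  (Hnonneg : forall n, 0 <= lam n)
  (G : Cpx -> Cpx -> Cpx) (HG : is_symbol lam G) :
  ~ LP2 (fun x y => G (Copp x) y).
Proof.
  intros [d [c [Hstable Hcv]]].
  pose proof (symbol_norm_lt lam G Hnonneg HG
                (multiplier_sequence_consecutive_pos lam Hms Hnontriv Hnonneg)) as Hlt.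
  set (Npos := Cnorm (G (Copp Ci) Ci)) in *; set (Nneg := Cnorm (G (Copp Ci) Cmi)) in *.
  destruct (Hcv 1 ((Nneg - Npos) / 3) ltac:(lra)) as [M HM].
  pose proof (HM M (Nat.le_refl M) Ci Ci Cnorm_Ci Cnorm_Ci) as Happrox_pos.
  pose proof (HM M (Nat.le_refl M) Ci Cmi Cnorm_Ci Cnorm_Cmi) as Happrox_neg.
  pose proof (real_stable_norm_ineq (d M) (c M) (Hstable M)) as Hstab.
  destruct (Cnorm_close (biv_eval (d M) (c M) Ci Ci) (G (Copp Ci) Ci)) as [Hpos _].
  destruct (Cnorm_close (biv_eval (d M) (c M) Ci Cmi) (G (Copp Ci) Cmi)) as [_ Hneg].
  simpl in Happrox_pos, Happrox_neg; fold Npos in Hpos; fold Nneg in Hneg.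
  lra.
Qed.
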